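(* Let $A=B[x;\alpha,\delta]_p$ be a Poisson polynomial algebra over a field $k$ of characteristic zero, and assume that $\alpha$ extends to a derivation $\hat\alpha$ of $A$ such that $\hat\alpha(x)=sx$ for some nonzero $s\in k$. Then for each Poisson prime ideal $Q$ of $B$, there are at most two $\hat\alpha$-stable Poisson prime ideals $P$ of $A$ with $P\cap B=Q$.
   Context: If $B$ is a Poisson algebra, $\alpha$ a Poisson derivation of $B$ (a derivation for both product and bracket) and $\delta$ a derivation of $B$ with $\delta(\{a,b\})=\{\delta(a),b\}+\{a,\delta(b)\}+\alpha(a)\delta(b)-\delta(a)\alpha(b)$ for all $a,b\in B$, then $B[x;\alpha,\delta]_p$ is the polynomial ring $B[x]$ with the unique Poisson bracket extending that of $B$ and satisfying $\{x,b\}=\alpha(b)x+\delta(b)$. A Poisson prime ideal is a prime ideal $P$ with $\{A,P\}\subseteq P$. *)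

From mathcomp Require Import all_boot all_algebra.
Set Implicit Arguments. Unset Strict Implicit. Unset Printing Implicit Defensive.
Import GRing.Theory.
Local Open Scope ring_scope.

(* Algebraic notions on a commutative ring R that is an algebra over a field k,
   the structure map k -> R being given explicitly by [e]
   (for B : comAlgType k, e c = c%:A ; for A = {poly B}, e c = (c%:A)%:P). *)
Section PoissonDefs.
Variables (k : fieldType) (R : comNzRingType) (e : k -> R).

Definition kderivation (d : R -> R) : Prop :=
  [/\ forall a b, d (a + b) = d a + d b,
      forall (c : k) a, d (e c * a) = e c * d a &
      forall a b, d (a * b) = d a * b + a * d b].

Definition poisson_bracket (br : R -> R -> R) : Prop :=
  [/\ forall a b c, br (a + b) c = br a c + br b c,
      forall (c : k) a b, br (e c * a) b = e c * br a b,
      forall a b, br a b = - br b a,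
      forall a b c, br a (br b c) + br b (br c a) + br c (br a b) = 0 &
      forall a b c, br a (b * c) = br a b * c + b * br a c].

Definition poisson_derivation (br : R -> R -> R) (d : R -> R) : Prop :=
  kderivation d /\ forall a b, d (br a b) = br (d a) b + br a (d b).
End PoissonDefs.

Section IdealDefs.
Variable (R : comNzRingType).

Definition ideal (P : R -> Prop) : Prop :=
  [/\ P 0, forall a b, P a -> P b -> P (a - b) & forall r a, P a -> P (r * a)].

Definition prime_ideal (P : R -> Prop) : Prop :=
  [/\ ideal P, ~ P 1 & forall a b, P (a * b) -> P a \/ P b].

Definition poisson_ideal (br : R -> R -> R) (P : R -> Prop) : Prop :=
  forall a b, P b -> P (br a b).

Definition same_set (P1 P2 : R -> Prop) : Prop := forall a, P1 a <-> P2 a.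

Definition at_most_two (S : (R -> Prop) -> Prop) : Prop :=
  forall P1 P2 P3, S P1 -> S P2 -> S P3 ->
    same_set P1 P2 \/ same_set P1 P3 \/ same_set P2 P3.
End IdealDefs.

Definition stable_poisson_prime_over (B : comNzRingType)
  (brA : {poly B} -> {poly B} -> {poly B}) (ah : {poly B} -> {poly B})
  (Q : B -> Prop) (P : {poly B} -> Prop) : Prop :=
  [/\ prime_ideal P, poisson_ideal brA P, (forall p, P p -> P (ah p)) &
      forall b : B, P b%:P <-> Q b].

From mathcomp Require Import all_boot all_algebra ring zify.
From Stdlib Require Import Classical Lia.
Import GRing.Theory.
Set Implicit Arguments. Unset Strict Implicit. Unset Printing Implicit Defensive.
Local Open Scope ring_scope.

(* Every Poisson prime [P] lying over [Q] contains [Q[x]].  If [P <> Q[x]], pick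
   [f] in [P] outside [Q[x]] of least degree [n]; its leading coefficient [c] is not
   in [Q], and by minimality [c alphahat(f)] and [c {f, b}] are congruent modulo
   [Q[x]] to multiples of [f].  Reading these congruences coefficientwise (with
   [char k = 0] and [s <> 0]) shows that a multiple of [f] is congruent to [h ^+ n],
   [h = n c x + f_(n-1)], so [h] lies in [P].  Over [Frac(B/Q)] the root [a] of such
   a linear polynomial satisfies [alpha a = s a] and [{a, b} = alpha(b) a - delta b];
   the difference [e] of two such roots has [{e, b} = alpha(b) e], so
   [0 = {e, e} = s e^2] and the roots agree.  Pseudo-division by the common linear
   polynomial then identifies the primes: besides [Q[x]] there is at most one. *)

Section Ideals.
Variables (R : comNzRingType) (I : R -> Prop).
Hypothesis idI : ideal I.

Lemma ideal_mem0 : I 0. Proof. by case: idI. Qed.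

Lemma ideal_memB a b : I a -> I b -> I (a - b). Proof. by case: idI => _ + _; apply. Qed.

Lemma ideal_memMl r a : I a -> I (r * a). Proof. by case: idI => _ _; apply. Qed.

Lemma ideal_memMr r a : I a -> I (a * r). Proof. by rewrite mulrC; apply: ideal_memMl. Qed.

Lemma ideal_memN a : I a -> I (- a).
Proof. by move=> Ia; rewrite -sub0r; apply: ideal_memB => //; apply: ideal_mem0. Qed.

Lemma ideal_memD a b : I a -> I b -> I (a + b).
Proof. by move=> Ia Ib; rewrite -[b]opprK; apply/ideal_memB/ideal_memN. Qed.

End Ideals.

Section PrimeIdeals.
Variables (R : comNzRingType) (I : R -> Prop).
Hypothesis prI : prime_ideal I.

Lemma prime_idealX a m : I (a ^+ m) -> I a.
Proof.
case: prI => _ I1 Imul; elim: m => [|m IHm]; first by rewrite expr0.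
by rewrite exprS => /Imul [].
Qed.

Lemma prime_ideal_notinM a b : ~ I a -> ~ I b -> ~ I (a * b).
Proof. by case: prI => _ _ Imul Ia Ib /Imul []. Qed.

End PrimeIdeals.

Lemma ideal_alg_cancel (k : fieldType) (B : comAlgType k) (I : B -> Prop) (c : k) a :
  ideal I -> c != 0 -> I (c%:A * a) -> I a.
Proof.
move=> idI c0 /(ideal_memMl idI (c^-1)%:A).
by rewrite !mulr_algl scalerA mulVf // scale1r.
Qed.

Lemma pchar0_no_2torsion (k : fieldType) (B : comAlgType k) :
  [pchar k] =i pred0 -> forall r : B, r *+ 2 = 0 -> r = 0.
Proof.
move=> char0 r r2; have n2 : (2%:R : k) != 0 by have /pcharf0P -> := char0.
by rewrite -[r]scale1r -(mulVf n2) -scalerA scaler_nat r2 scaler0.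
Qed.

Section Derivations.
Variables (k : fieldType) (R : comNzRingType) (e : k -> R) (d : R -> R).
Hypothesis der : kderivation e d.

Lemma derivationD a b : d (a + b) = d a + d b. Proof. by case: der. Qed.

Lemma derivationM a b : d (a * b) = d a * b + a * d b. Proof. by case: der. Qed.

Lemma derivation0 : d 0 = 0.
Proof. by apply: (addrI (d 0)); rewrite -derivationD !addr0. Qed.

Lemma derivationN a : d (- a) = - d a.
Proof. by apply: (addrI (d a)); rewrite -derivationD !subrr derivation0. Qed.

Lemma derivationB a b : d (a - b) = d a - d b.
Proof. by rewrite derivationD derivationN. Qed.

Lemma derivation_nat n : d n%:R = 0.
Proof.
have d1 : d 1 = 0 by apply: (addrI (d 1)); rewrite addr0 -{3}[1]mulr1 derivationM mulr1 mul1r.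
elim: n => [|n IHn]; first exact: derivation0.
by rewrite mulrS derivationD d1 IHn addr0.
Qed.

End Derivations.

Section Brackets.
Variables (k : fieldType) (R : comNzRingType) (e : k -> R) (br : R -> R -> R).
Hypothesis brP : poisson_bracket e br.

Lemma bracketDl a b c : br (a + b) c = br a c + br b c. Proof. by case: brP. Qed.

Lemma bracketC a b : br a b = - br b a. Proof. by case: brP. Qed.

Lemma bracketMr a b c : br a (b * c) = br a b * c + b * br a c. Proof. by case: brP. Qed.

Lemma bracketMl a b c : br (a * b) c = br a c * b + a * br b c.
Proof. by rewrite bracketC bracketMr [br c a]bracketC [br c b]bracketC; ring. Qed.

Lemma bracket0l c : br 0 c = 0.
Proof. by apply: (addrI (br 0 c)); rewrite -bracketDl !addr0. Qed.

Lemma bracketNl a c : br (- a) c = - br a c.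
Proof. by apply: (addrI (br a c)); rewrite -bracketDl !subrr bracket0l. Qed.

Lemma bracketBl a b c : br (a - b) c = br a c - br b c.
Proof. by rewrite bracketDl bracketNl. Qed.

Lemma bracket_natl n c : br n%:R c = 0.
Proof.
have br1 : br 1 c = 0.
  by apply: (addrI (br 1 c)); rewrite addr0 -{3}[1]mulr1 bracketMl mulr1 mul1r.
elim: n => [|n IHn]; first exact: bracket0l.
by rewrite mulrS bracketDl br1 IHn addr0.
Qed.

Lemma bracketxx (no2torsion : forall r : R, r *+ 2 = 0 -> r = 0) a : br a a = 0.
Proof. by apply: no2torsion; rewrite mulr2n {1}bracketC addNr. Qed.

End Brackets.

Definition coefs_in (R : nzRingType) (I : R -> Prop) (g : {poly R}) := forall i, I g`_i.

Section CoefsIn.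
Variables (R : comNzRingType) (I : R -> Prop).
Hypothesis idI : ideal I.

Lemma coefs_in_ideal : ideal (coefs_in I).
Proof.
split=> [i | a b Ia Ib i | r a Ia i]; first by rewrite coef0; apply: ideal_mem0.
  by rewrite coefB; apply: ideal_memB.
rewrite coefM; apply: big_ind => [|x y|j _]; [exact: ideal_mem0 | exact: ideal_memD |].
exact: ideal_memMl.
Qed.

Lemma coefs_inC a : I a -> coefs_in I a%:P.
Proof. by move=> Ia i; rewrite coefC; case: (i == 0)%N => //; apply: ideal_mem0. Qed.

Lemma coefs_in_sub (P : {poly R} -> Prop) g :
  ideal P -> (forall b, I b -> P b%:P) -> coefs_in I g -> P g.
Proof.
move=> idP IP Ig; rewrite -[g]coefK poly_def.
apply: big_ind => [|x y|i _]; [exact: ideal_mem0 | exact: ideal_memD |].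
by rewrite -mul_polyC; apply: (ideal_memMr idP); apply: IP.
Qed.

End CoefsIn.

Lemma coef_linear_exp (R : comNzRingType) (a d : R) m :
  (forall j, (m < j)%N -> ((a%:P * 'X + d%:P) ^+ m)`_j = 0) /\
  ((a%:P * 'X + d%:P) ^+ m)`_m = a ^+ m.
Proof.
have coefMlin (p : {poly R}) j : (p * (a%:P * 'X + d%:P))`_j =
    (if j == 0%N then 0 else p`_j.-1 * a) + p`_j * d.
  by rewrite mulrDr mulrA coefD coefMX !coefMC.
elim: m => [|m [IH1 IH2]].
  split; last by rewrite expr0 coefC.
  by move=> [|j] //= _; rewrite expr0 coefC.
split=> [[|j] // lt_mj|]; rewrite exprSr coefMlin /=.
  by rewrite !IH1 ?mul0r ?addr0 // (ltn_trans _ lt_mj).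
by rewrite IH2 IH1 // exprSr mul0r addr0.
Qed.

Lemma exists_minimal (T : Type) (F : T -> Prop) (size_of : T -> nat) :
  (exists x, F x) -> exists x, F x /\ forall y, F y -> (size_of x <= size_of y)%N.
Proof.
move=> [x0 Fx0].
suff : forall N x, (size_of x <= N)%N -> F x ->
  exists x, F x /\ forall y, F y -> (size_of x <= size_of y)%N by apply; last exact: Fx0.
elim=> [|N IHN] x le_xN Fx.
  by exists x; split=> // y _; rewrite (leq_trans le_xN).
case: (classic (exists y, F y /\ (size_of y < size_of x)%N)) => [[y [Fy lt_yx]]|no_smaller].
  by apply: (IHN y) => //; rewrite -ltnS (leq_trans lt_yx).
exists x; split=> // y Fy; rewrite leqNgt; apply/negP => lt_yx.
by apply: no_smaller; exists y.
Qed.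

Lemma exists_minimal_outside (R : comNzRingType) (I : R -> Prop) (P : {poly R} -> Prop) :
  ideal I -> ideal P -> (forall b, I b -> P b%:P) ->
  (exists g, P g /\ ~ coefs_in I g) ->
  exists f, [/\ P f, ~ I (lead_coef f) &
                forall g, P g -> (size g < size f)%N -> coefs_in I g].
Proof.
move=> idI idP IP outside.
have [f [[Pf f_out] f_min]] := exists_minimal (fun p : {poly R} => size p) outside.
have f_small g : P g -> (size g < size f)%N -> coefs_in I g.
  by move=> Pg lt_gf; apply: NNPP => g_out; have := f_min g (conj Pg g_out); rewrite leqNgt lt_gf.
have f_gt0 : (0 < size f)%N.
  rewrite lt0n size_poly_eq0; apply/eqP => f0; apply: f_out; rewrite f0.
  exact: ideal_mem0 (coefs_in_ideal idI).
exists f; split=> // Ilead; apply: f_out.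
pose g := f - (lead_coef f)%:P * 'X^((size f).-1).
have lt_gf : (size g < size f)%N.
  rewrite -(prednK f_gt0) ltnS; apply/leq_sizeP => j le_fj.
  rewrite /g coefB coefCM coefXn; case: (eqVneq j (size f).-1) => [->|ne_jf].
    by rewrite mulr1 lead_coefE subrr.
  rewrite mulr0 subr0 nth_default // -(prednK f_gt0).
  by move: le_fj ne_jf; rewrite leq_eqVlt eq_sym => /orP [->|].
have Ig := f_small g (ideal_memB idP Pf (ideal_memMr idP _ (IP _ Ilead))) lt_gf.
move=> i; have := ideal_memD idI (Ig i) (ideal_memMr idI (i == (size f).-1)%:R Ilead).
by rewrite /g coefB coefCM coefXn mulrC subrK.
Qed.

Section PoissonOreExtension.
Variables (k : fieldType) (B : comAlgType k).
Variables (brB : B -> B -> B) (alpha delta : B -> B).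
Variables (brA : {poly B} -> {poly B} -> {poly B}) (alphahat : {poly B} -> {poly B}).
Variable s : k.
Hypothesis char0 : [pchar k] =i pred0.
Hypothesis brB_poisson : poisson_bracket (fun c : k => c%:A : B) brB.
Hypothesis alpha_der : kderivation (fun c : k => c%:A : B) alpha.
Hypothesis brA_poisson : poisson_bracket (fun c : k => (c%:A : B)%:P) brA.
Hypothesis brAC : forall a b : B, brA a%:P b%:P = (brB a b)%:P.
Hypothesis brAXC : forall b : B, brA 'X b%:P = (alpha b)%:P * 'X + (delta b)%:P.
Hypothesis alphahat_der : kderivation (fun c : k => (c%:A : B)%:P) alphahat.
Hypothesis alphahatC : forall b : B, alphahat b%:P = (alpha b)%:P.
Hypothesis alphahatX : alphahat 'X = (s%:A : B)%:P * 'X.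
Hypothesis s_neq0 : s != 0.

Lemma coef_alphahat g i : (alphahat g)`_i = alpha g`_i + s%:A * i%:R * g`_i.
Proof.
elim/poly_ind: g i => [|p c IHp] i.
  by rewrite (derivation0 alphahat_der) !coef0 (derivation0 alpha_der); ring.
rewrite (derivationD alphahat_der) (derivationM alphahat_der) alphahatX alphahatC mulrA.
rewrite !coefD !coefMX coefMC !coefC; case: i => [|i] /=.
  by rewrite !add0r; ring.
by rewrite !addr0 IHp -[i.+1]addn1 natrD; ring.
Qed.

Lemma coef_bracketC g b i : (brA g b%:P)`_i =
  brB g`_i b + alpha b * i%:R * g`_i + delta b * i.+1%:R * g`_i.+1.
Proof.
elim/poly_ind: g i => [|p c IHp] i.
  by rewrite (bracket0l brA_poisson) !coef0 (bracket0l brB_poisson); ring.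
rewrite (bracketDl brA_poisson) (bracketMl brA_poisson) brAXC brAC mulrDr mulrA.
rewrite !coefD !coefMX !coefMC !coefC; case: i => [|i] /=.
  by rewrite !add0r !addr0; ring.
by rewrite !addr0 IHp -[i.+2]addn1 -[i.+1]addn1 !natrD; ring.
Qed.

Definition alphahat_defect (c : B) (m t : nat) (G : {poly B}) :=
  c%:P * alphahat G - (m%:R * alpha c + t%:R * s%:A * c)%:P * G.

Definition bracket_defect (c b : B) (m t : nat) (G : {poly B}) :=
  c%:P * brA G b%:P - (m%:R * brB c b + t%:R * alpha b * c)%:P * G.

Lemma alphahat_defectM c G1 G2 m1 t1 m2 t2 :
  alphahat_defect c (m1 + m2) (t1 + t2) (G1 * G2) =
  alphahat_defect c m1 t1 G1 * G2 + G1 * alphahat_defect c m2 t2 G2.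
Proof.
by rewrite /alphahat_defect (derivationM alphahat_der) !natrD !(rmorphD, rmorphM) /=; ring.
Qed.

Lemma bracket_defectM c b G1 G2 m1 t1 m2 t2 :
  bracket_defect c b (m1 + m2) (t1 + t2) (G1 * G2) =
  bracket_defect c b m1 t1 G1 * G2 + G1 * bracket_defect c b m2 t2 G2.
Proof.
by rewrite /bracket_defect (bracketMl brA_poisson) !natrD !(rmorphD, rmorphM) /=; ring.
Qed.

Lemma alphahat_defectB c G1 G2 m t :
  alphahat_defect c m t (G1 - G2) = alphahat_defect c m t G1 - alphahat_defect c m t G2.
Proof. by rewrite /alphahat_defect (derivationB alphahat_der); ring. Qed.

Lemma bracket_defectB c b G1 G2 m t :
  bracket_defect c b m t (G1 - G2) = bracket_defect c b m t G1 - bracket_defect c b m t G2.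
Proof. by rewrite /bracket_defect (bracketBl brA_poisson); ring. Qed.

Variable Q : B -> Prop.
Hypothesis Q_prime : prime_ideal Q.

Let idQ : ideal Q. Proof. by case: Q_prime. Qed.

(* Modulo Q[x], [alphahat] and [{-, b}] act on [G] as on [c^m u^t], where [u] is
   linear with [alphahat u = s u] and [{u, b} = alpha(b) u]. *)
Definition has_weight (c : B) (m t : nat) (G : {poly B}) :=
  coefs_in Q (alphahat_defect c m t G) /\ forall b, coefs_in Q (bracket_defect c b m t G).

Section Weights.
Variable c : B.
Let idQx : ideal (coefs_in Q) := coefs_in_ideal idQ.

Lemma has_weightM G1 G2 m1 t1 m2 t2 : has_weight c m1 t1 G1 -> has_weight c m2 t2 G2 ->
  has_weight c (m1 + m2) (t1 + t2) (G1 * G2).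
Proof.
move=> [A1 B1] [A2 B2]; split=> [|b]; rewrite ?alphahat_defectM ?bracket_defectM;
  by apply: (ideal_memD idQx); [apply: (ideal_memMr idQx) | apply: (ideal_memMl idQx)].
Qed.

Lemma has_weightB G1 G2 m t : has_weight c m t G1 -> has_weight c m t G2 ->
  has_weight c m t (G1 - G2).
Proof.
move=> [A1 B1] [A2 B2]; split=> [|b].
  by rewrite alphahat_defectB; apply: (ideal_memB idQx).
by rewrite bracket_defectB; apply: (ideal_memB idQx).
Qed.

Lemma has_weight_nat n : has_weight c 0 0 (n%:R)%:P.
Proof.
split=> [|b]; apply: (@eq_ind _ 0 (coefs_in Q)); try exact: (ideal_mem0 idQx).
  by rewrite /alphahat_defect alphahatC (derivation_nat alpha_der) !(rmorphD, rmorphM) /=; ring.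
by rewrite /bracket_defect brAC (bracket_natl brB_poisson) !(rmorphD, rmorphM) /=; ring.
Qed.

Lemma has_weightC : has_weight c 1 0 c%:P.
Proof.
split=> [|b]; apply: (@eq_ind _ 0 (coefs_in Q)); try exact: (ideal_mem0 idQx).
  by rewrite /alphahat_defect alphahatC !(rmorphD, rmorphM) /=; ring.
by rewrite /bracket_defect brAC !(rmorphD, rmorphM) /=; ring.
Qed.

Lemma has_weightX G m t j : has_weight c m t G -> has_weight c (j * m) (j * t) (G ^+ j).
Proof.
move=> wG; elim: j => [|j IHj]; first by rewrite expr0 !mul0n -polyC1; apply: (has_weight_nat 1).
by rewrite exprS !mulSn; apply: has_weightM.
Qed.

End Weights.

Let no2torsion : forall r : B, r *+ 2 = 0 -> r = 0 := pchar0_no_2torsion char0.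

Let natk_neq0 n : (0 < n)%N -> (n%:R : k) != 0.
Proof. by move=> n_gt0; have /pcharf0P -> := char0; rewrite -lt0n. Qed.

Lemma has_weight_coef_step c G n j : ~ Q c -> has_weight c n n G ->
  (j < n)%N -> Q G`_j.+1 -> Q G`_j.
Proof.
move=> c_notin [wA wB] lt_jn Qg1.
set z := G`_j; set g1 := G`_j.+1.
have alpha_rel : Q (c * (alpha z + s%:A * j%:R * z) - (n%:R * alpha c + n%:R * s%:A * c) * z).
  by have := wA j; rewrite /alphahat_defect coefB !coefCM coef_alphahat.
have bracket_rel b : Q (c * (brB z b + alpha b * j%:R * z + delta b * j.+1%:R * g1)
            - (n%:R * brB c b + n%:R * alpha b * c) * z).
  by have := wB b j; rewrite /bracket_defect coefB !coefCM coef_bracketC.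
pose K : B := n%:R - j%:R.
(* Take [b = z] and [b = c]: the [delta]-terms carry the factor [g1] in [Q], and
   [{z, z} = {c, c} = 0] leave [s (n - j)^2 (c z)^2] against the [alphahat]-relation. *)
have QsKz : Q (s%:A * (K * (K * (c * z) ^+ 2))).
  apply: (@eq_ind _ (- c * (c * (brB z z + alpha z * j%:R * z + delta z * j.+1%:R * g1)
            - (n%:R * brB c z + n%:R * alpha z * c) * z)
     + (c * c * delta z * j.+1%:R) * g1
     - (K * c * z) * (c * (alpha z + s%:A * j%:R * z) - (n%:R * alpha c + n%:R * s%:A * c) * z)
     + (n%:R * z) * (c * (brB z c + alpha c * j%:R * z + delta c * j.+1%:R * g1)
            - (n%:R * brB c c + n%:R * alpha c * c) * z)
     - (n%:R * z * c * delta c * j.+1%:R) * g1) Q); last first.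
    by rewrite !(bracketxx brB_poisson) // [brB c z](bracketC brB_poisson) /K; ring.
  apply: (ideal_memB idQ); last exact: (ideal_memMl idQ).
  apply: (ideal_memD idQ); last exact: (ideal_memMl idQ).
  apply: (ideal_memB idQ); last exact: (ideal_memMl idQ).
  by apply: (ideal_memD idQ); apply: (ideal_memMl idQ).
have KE : K = ((n - j)%:R : k)%:A by rewrite scaler_nat /K natrB // ltnW.
have nj_neq0 : ((n - j)%:R : k) != 0 by apply: natk_neq0; rewrite subn_gt0.
move: QsKz; rewrite KE => /(ideal_alg_cancel idQ s_neq0).
move=> /(ideal_alg_cancel idQ nj_neq0) /(ideal_alg_cancel idQ nj_neq0).
by move=> /(prime_idealX Q_prime); case: Q_prime => _ _ Qmul /Qmul [].
Qed.

Lemma has_weight_coefs_in c G n : ~ Q c -> has_weight c n n G ->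
  (forall j, (n <= j)%N -> G`_j = 0) -> coefs_in Q G.
Proof.
move=> c_notin wG G_high.
have QG i : Q G`_(n - i).
  elim: i => [|i IHi]; first by rewrite subn0 G_high //; apply: (ideal_mem0 idQ).
  have [le_ni|lt_in] := leqP n i; first by have -> : (n - i.+1 = n - i)%N by lia.
  apply: (has_weight_coef_step c_notin wG); first by lia.
  by have -> : ((n - i.+1).+1 = n - i)%N by lia.
move=> j; have [le_nj|lt_jn] := leqP n j; first by rewrite G_high //; apply: (ideal_mem0 idQ).
by have -> : j = (n - (n - j))%N by lia.
Qed.

(* Modulo Q, [a := d / c] satisfies [alpha a = s a] and [{a, b} = alpha(b) a - delta b]. *)
Definition linear_invariant c d :=
  Q (c * alpha d - alpha c * d - s%:A * c * d) /\
  forall b, Q (c * c * delta b + c * brB d b - brB c b * d - alpha b * c * d).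

Lemma stable_prime_defect_mem P c m t g : stable_poisson_prime_over brA alphahat Q P ->
  P g -> P (alphahat_defect c m t g) /\ forall b, P (bracket_defect c b m t g).
Proof.
case=> [[idP _ _] Pbr Palphahat _] Pg; split=> [|b]; apply: (ideal_memB idP).
- by apply: (ideal_memMl idP); apply: Palphahat.
- exact: (ideal_memMl idP).
- by apply: (ideal_memMl idP); rewrite (bracketC brA_poisson); apply/(ideal_memN idP)/Pbr.
- exact: (ideal_memMl idP).
Qed.

Lemma linear_mem_invariant P c d : stable_poisson_prime_over brA alphahat Q P ->
  P (c%:P * 'X + d%:P) -> linear_invariant c d.
Proof.
move=> P_over Ph; have [_ _ _ PC] := P_over.
have [Pa Pb] := stable_prime_defect_mem c 1 1 P_over Ph.
split=> [|b]; apply/PC.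
  apply: (@eq_ind _ _ P Pa); rewrite /alphahat_defect (derivationD alphahat_der).
  rewrite (derivationM alphahat_der) !alphahatC alphahatX.
  by rewrite !(rmorphB, rmorphD, rmorphM) /=; ring.
apply: (@eq_ind _ _ P (Pb b)); rewrite /bracket_defect (bracketDl brA_poisson).
rewrite (bracketMl brA_poisson) !brAC brAXC.
by rewrite !(rmorphB, rmorphD, rmorphM) /=; ring.
Qed.

Lemma linear_invariant_diff c d c' d' : ~ Q c -> ~ Q c' ->
  linear_invariant c d -> linear_invariant c' d' -> Q (d * c' - c * d').
Proof.
move=> c_notin c'_notin [alpha_rel bracket_rel] [alpha_rel' bracket_rel'].
set e := d * c' - c * d'; set m := c * c'.
have Qbr b : Q (m * brB e b - e * brB m b - alpha b * e * m).
  apply: (@eq_ind _ (c' ^+ 2 * (c * c * delta b + c * brB d b - brB c b * d - alpha b * c * d)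
     - c ^+ 2 * (c' * c' * delta b + c' * brB d' b - brB c' b * d' - alpha b * c' * d')) Q).
    by apply: (ideal_memB idQ); apply: (ideal_memMl idQ).
  by rewrite /e /m (bracketBl brB_poisson) !(bracketMl brB_poisson); ring.
have Qalpha : Q (m * alpha e - e * alpha m - s%:A * m * e).
  apply: (@eq_ind _ (c' ^+ 2 * (c * alpha d - alpha c * d - s%:A * c * d)
     - c ^+ 2 * (c' * alpha d' - alpha c' * d' - s%:A * c' * d')) Q).
    by apply: (ideal_memB idQ); apply: (ideal_memMl idQ).
  by rewrite /e /m (derivationB alpha_der) !(derivationM alpha_der); ring.
(* [{e, e} = 0] and [{m, m} = 0] turn the bracket relations into [alpha e m = alpha m e],
   which against the [alpha]-relation leaves [s (e m)^2]. *)
have : Q (s%:A * (e * m) ^+ 2).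
  apply: (@eq_ind _ (- (m * (m * brB e e - e * brB m e - alpha e * e * m)
        - e * (m * brB e m - e * brB m m - alpha m * e * m)) - e * m *
        (m * alpha e - e * alpha m - s%:A * m * e)) Q).
    apply: (ideal_memB idQ); last exact: (ideal_memMl idQ).
    by apply/(ideal_memN idQ)/(ideal_memB idQ); apply: (ideal_memMl idQ).
  by rewrite !(bracketxx brB_poisson) // [brB m e](bracketC brB_poisson); ring.
move=> /(ideal_alg_cancel idQ s_neq0) /(prime_idealX Q_prime).
case: Q_prime => _ _ Qmul /Qmul [] // Qm.
by exfalso; apply: (prime_ideal_notinM Q_prime c_notin c'_notin).
Qed.

Section MinimalElement.
Variable P : {poly B} -> Prop.
Hypothesis P_over : stable_poisson_prime_over brA alphahat Q P.
Variables (f : {poly B}) (n : nat).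
Hypotheses (Pf : P f) (f_size : size f = n.+1) (n_gt0 : (0 < n)%N).
Hypothesis lead_notin : ~ Q (lead_coef f).
Hypothesis f_min : forall g, P g -> (size g < size f)%N -> coefs_in Q g.

Local Notation c := (lead_coef f).
Local Notation h := ((n%:R * c)%:P * 'X + (f`_n.-1)%:P).

Let f_lead : f`_n = c. Proof. by rewrite lead_coefE f_size. Qed.

Let f_high j : (n < j)%N -> f`_j = 0.
Proof. by move=> lt_nj; rewrite nth_default // f_size. Qed.

Let natr_pred : (n%:R : B) = n.-1%:R + 1. Proof. by rewrite natr1 prednK. Qed.

Lemma minimal_weight : has_weight c 1 n f.
Proof.
have [Pa Pb] := stable_prime_defect_mem c 1 n P_over Pf.
split=> [|b]; apply: f_min => //; rewrite f_size ltnS; apply/leq_sizeP => j le_nj.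
  rewrite /alphahat_defect coefB !coefCM coef_alphahat.
  move: le_nj; rewrite leq_eqVlt => /predU1P [<-|lt_nj]; first by rewrite f_lead; ring.
  by rewrite f_high // (derivation0 alpha_der); ring.
rewrite /bracket_defect coefB !coefCM coef_bracketC (@f_high j.+1) //.
move: le_nj; rewrite leq_eqVlt => /predU1P [<-|lt_nj]; first by rewrite f_lead; ring.
by rewrite f_high // (bracket0l brB_poisson); ring.
Qed.

(* The weight relations of [f], read at the coefficient of [x^(n-1)]. *)
Lemma minimal_linear_weight : has_weight c 1 1 h.
Proof.
have [wA wB] := minimal_weight; split=> [|b].
  apply: (@eq_ind _ ((alphahat_defect c 1 n f)`_n.-1)%:P (coefs_in Q)).
    exact/(coefs_inC idQ)/wA.
  rewrite /alphahat_defect coefB !coefCM coef_alphahat.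
  rewrite (derivationD alphahat_der) (derivationM alphahat_der).
  rewrite !alphahatC alphahatX (derivationM alpha_der) (derivation_nat alpha_der).
  by rewrite !(rmorphB, rmorphD, rmorphM) /= natr_pred !(rmorphB, rmorphD, rmorphM) /=; ring.
apply: (@eq_ind _ ((bracket_defect c b 1 n f)`_n.-1)%:P (coefs_in Q)).
  exact/(coefs_inC idQ)/wB.
rewrite /bracket_defect coefB !coefCM coef_bracketC prednK // f_lead (bracketDl brA_poisson).
rewrite (bracketMl brA_poisson) !brAC brAXC (bracketMl brB_poisson) (bracket_natl brB_poisson).
by rewrite !(rmorphB, rmorphD, rmorphM) /= natr_pred !(rmorphB, rmorphD, rmorphM) /=; ring.
Qed.

(* Both terms have weight [(n, n)] and agree in degree [n]. *)
Lemma minimal_linear_exp : coefs_in Q (((n ^ n)%:R * c ^+ n.-1)%:P * f - h ^+ n).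
Proof.
apply: (has_weight_coefs_in lead_notin).
  apply: has_weightB; last by have := has_weightX n minimal_linear_weight; rewrite muln1; apply.
  rewrite rmorphM rmorphXn /=.
  have := has_weightM (has_weightM (has_weight_nat c (n ^ n)) (has_weightX n.-1 (has_weightC c)))
    minimal_weight.
  by rewrite !muln1 !muln0 add0n addn0 addn1 prednK //; apply.
have [h_high h_lead] := coef_linear_exp (n%:R * c) (f`_n.-1) n.
move=> j; rewrite leq_eqVlt coefB coefCM => /predU1P [<-|lt_nj].
  by rewrite h_lead f_lead natrX exprMn -mulrA -exprSr prednK // subrr.
by rewrite h_high // f_high // mulr0 subr0.
Qed.

Lemma minimal_linear_mem : P h.
Proof.
case: P_over => Pprime _ _ PC; have [idP _ _] := Pprime.
apply: (prime_idealX Pprime (m := n)).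
have Qx := coefs_in_sub idP (fun b Qb => proj2 (PC b) Qb) minimal_linear_exp.
have := ideal_memB idP (ideal_memMl idP ((n ^ n)%:R * c ^+ n.-1)%:P Pf) Qx.
by rewrite opprB addrC subrK.
Qed.

End MinimalElement.

Lemma exists_linear_mem P : stable_poisson_prime_over brA alphahat Q P ->
  (exists g, P g /\ ~ coefs_in Q g) -> exists c d, ~ Q c /\ P (c%:P * 'X + d%:P).
Proof.
move=> P_over outside; have [Pprime _ _ PC] := P_over; have [idP _ _] := Pprime.
have [f [Pf lead_notin f_min]] :=
  exists_minimal_outside idQ idP (fun b Qb => proj2 (PC b) Qb) outside.
have [f0|f_neq0] := eqVneq f 0.
  by rewrite f0 lead_coef0 in lead_notin; case: lead_notin; apply: (ideal_mem0 idQ).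
have f_size := polySpred f_neq0; set n := (size f).-1 in f_size.
have [n0|n_gt0] := posnP n.
  case: lead_notin; rewrite (@size1_polyC _ f) ?f_size ?n0 // lead_coefC; apply/PC.
  by rewrite -size1_polyC ?f_size ?n0.
exists (n%:R * lead_coef f), f`_n.-1; split; last exact: minimal_linear_mem.
by rewrite -scaler_nat => /(ideal_alg_cancel idQ (natk_neq0 n_gt0)).
Qed.

(* From [c' (c x + d) = (d c' - c d') + c (c' x + d')]. *)
Lemma linear_mem_transfer P c d c' d' : stable_poisson_prime_over brA alphahat Q P ->
  ~ Q c' -> Q (d * c' - c * d') -> P (c'%:P * 'X + d'%:P) -> P (c%:P * 'X + d%:P).
Proof.
move=> [[idP _ Pmul] _ _ PC] c'_notin Qe Ph'.
have : P (c'%:P * (c%:P * 'X + d%:P)).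
  apply: (@eq_ind _ ((d * c' - c * d')%:P + c%:P * (c'%:P * 'X + d'%:P)) P).
    by apply: (ideal_memD idP); [apply/PC | apply: (ideal_memMl idP)].
  by rewrite !(rmorphB, rmorphD, rmorphM) /=; ring.
by case/Pmul => // /PC.
Qed.

Lemma sub_of_linear_mem P P' c d :
  stable_poisson_prime_over brA alphahat Q P -> stable_poisson_prime_over brA alphahat Q P' ->
  ~ Q c -> P (c%:P * 'X + d%:P) -> P' (c%:P * 'X + d%:P) -> forall g, P g -> P' g.
Proof.
move=> [[idP _ _] _ _ PC] [P'prime _ _ P'C] c_notin Ph P'h g Pg.
have [idP' _ P'mul] := P'prime.
have c_neq0 : c != 0 by apply/eqP => c0; apply: c_notin; rewrite c0; apply: (ideal_mem0 idQ).
have h_size : size (c%:P * 'X + d%:P) = 2%N.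
  by rewrite size_MXaddC polyC_eq0 (negbTE c_neq0) /= size_polyC c_neq0.
have h_lead : lead_coef (c%:P * 'X + d%:P) = c.
  by rewrite lead_coefE h_size coefD coefMX coefC /= coefC addr0.
(* Pseudo-division by the linear polynomial: [c ^+ K * g = q * h + r] with [r] constant. *)
have := Pdiv.ComRing.rdivp_eq (c%:P * 'X + d%:P) g; rewrite h_lead.
set q := Pdiv.Ring.rdivp _ _; set r := Pdiv.Ring.rmodp _ _; set K := Pdiv.Ring.rscalp _ _.
move=> div_eq.
have r_const : r = (r`_0)%:P.
  apply: size1_polyC; have h_neq0 : c%:P * 'X + d%:P != 0 by rewrite -size_poly_eq0 h_size.
  by have := Pdiv.CommonRing.ltn_rmodp g (c%:P * 'X + d%:P); rewrite h_size h_neq0.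
have Pr : P r.
  apply: (@eq_ind _ ((c ^+ K)%:P * g - q * (c%:P * 'X + d%:P)) P).
    by apply: (ideal_memB idP); apply: (ideal_memMl idP).
  by rewrite mul_polyC div_eq; ring.
have P'r : P' r by rewrite r_const; apply/P'C/PC; rewrite -r_const.
have : P' ((c ^+ K)%:P * g).
  by rewrite mul_polyC div_eq; apply: (ideal_memD idP') => //; apply: (ideal_memMl idP').
by case/P'mul => // /P'C /(prime_idealX Q_prime).
Qed.

Lemma stable_prime_over_eq_linear P P' :
  stable_poisson_prime_over brA alphahat Q P -> stable_poisson_prime_over brA alphahat Q P' ->
  (exists g, P g /\ ~ coefs_in Q g) -> (exists g, P' g /\ ~ coefs_in Q g) -> same_set P P'.
Proof.
move=> P_over P'_over /(exists_linear_mem P_over) [c [d [c_notin Ph]]].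
move=> /(exists_linear_mem P'_over) [c' [d' [c'_notin P'h']]].
have Qe := linear_invariant_diff c_notin c'_notin
  (linear_mem_invariant P_over Ph) (linear_mem_invariant P'_over P'h').
have P'h := linear_mem_transfer P'_over c'_notin Qe P'h'.
have Ph' : P (c'%:P * 'X + d'%:P).
  apply: (linear_mem_transfer P_over c_notin) Ph.
  by apply: (@eq_ind _ (- (d * c' - c * d')) Q); [exact: (ideal_memN idQ) | ring].
move=> g; split; first exact: (sub_of_linear_mem P_over P'_over c_notin Ph P'h).
exact: (sub_of_linear_mem P'_over P_over c'_notin P'h' Ph').
Qed.

Lemma stable_prime_over_coefs_in P : stable_poisson_prime_over brA alphahat Q P ->
  ~ (exists g, P g /\ ~ coefs_in Q g) -> same_set P (coefs_in Q).
Proof.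
move=> [[idP _ _] _ _ PC] P_in g; split=> [Pg|].
  by apply: NNPP => g_out; apply: P_in; exists g.
exact: coefs_in_sub idP (fun b Qb => proj2 (PC b) Qb).
Qed.

Lemma stable_prime_over_at_most_two : at_most_two (stable_poisson_prime_over brA alphahat Q).
Proof.
pose outside P := exists g, P g /\ ~ coefs_in Q g.
have same_kind P P' : stable_poisson_prime_over brA alphahat Q P ->
    stable_poisson_prime_over brA alphahat Q P' -> (outside P <-> outside P') -> same_set P P'.
  move=> P_over P'_over [PP' P'P]; have [P_out|P_in] := classic (outside P).
    exact: stable_prime_over_eq_linear P_over P'_over P_out (PP' P_out).
  have E := stable_prime_over_coefs_in P_over P_in.
  have E' := stable_prime_over_coefs_in P'_over (fun P'_out => P_in (P'P P'_out)).
  by move=> g; split=> [/(E g).1/(E' g).2 | /(E' g).1/(E g).2].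
move=> P1 P2 P3 P1_over P2_over P3_over.
have := classic (outside P1); have := classic (outside P2); have := classic (outside P3).
have : (outside P1 <-> outside P2) \/ (outside P1 <-> outside P3) \/ (outside P2 <-> outside P3)
  -> same_set P1 P2 \/ same_set P1 P3 \/ same_set P2 P3.
  by case=> [E|[E|E]]; [left | right; left | right; right]; exact: same_kind E.
tauto.
Qed.

End PoissonOreExtension.

Theorem proposition1p3 (k : fieldType) (B : comAlgType k)
  (brB : B -> B -> B) (alpha delta : B -> B)
  (brA : {poly B} -> {poly B} -> {poly B})
  (alphahat : {poly B} -> {poly B}) (s : k) :
  [pchar k] =i pred0 ->
  poisson_bracket (fun c : k => c%:A : B) brB ->
  poisson_derivation (fun c : k => c%:A : B) brB alpha ->
  kderivation (fun c : k => c%:A : B) delta ->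
  (forall a b : B, delta (brB a b) =
     brB (delta a) b + brB a (delta b) + alpha a * delta b - delta a * alpha b) ->
  poisson_bracket (fun c : k => (c%:A : B)%:P) brA ->
  (forall a b : B, brA a%:P b%:P = (brB a b)%:P) ->
  (forall b : B, brA 'X b%:P = (alpha b)%:P * 'X + (delta b)%:P) ->
  kderivation (fun c : k => (c%:A : B)%:P) alphahat ->
  (forall b : B, alphahat b%:P = (alpha b)%:P) ->
  s != 0 ->
  alphahat 'X = (s%:A : B)%:P * 'X ->
  forall Q : B -> Prop, prime_ideal Q -> poisson_ideal brB Q ->
  at_most_two (stable_poisson_prime_over brA alphahat Q).
Proof.
move=> char0 brB_poisson [alpha_der _] _ _ brA_poisson brAC brAXC alphahat_der alphahatC
  s_neq0 alphahatX Q Q_prime _.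
exact: (stable_prime_over_at_most_two char0 brB_poisson alpha_der brA_poisson brAC brAXC
  alphahat_der alphahatC alphahatX s_neq0 Q_prime).
Qed.
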